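(* Let $\mathcal{T}_R$ be the class of all finite reflexive tournaments. For any finite set $\{O_1,\dots,O_k\}\subseteq\mathcal{T}_R$, the class $\mathrm{Av}(O_1,\dots,O_k)=\{T\in\mathcal{T}_R: O_i\not\preceq T \text{ for all } i\}$, with respect to the homomorphic image ordering $\preceq$, is not well quasi-ordered.
   Context: A reflexive tournament is a digraph $T$ (set with binary relation $E(T)$) in which every loop $(x,x)$ is an edge and, for any two distinct $x,y$, exactly one of $(x,y),(y,x)$ is an edge. A homomorphism maps edges to edges. Homomorphic image ordering: $A\preceq B$ iff there is a surjective homomorphism $B\to A$. Well quasi-ordered means no infinite strictly decreasing sequence and no infinite antichain; tournaments considered up to isomorphism. *)

From mathcomp Require Import all_boot.
From Stdlib Require List.
Set Implicit Arguments. Unset Strict Implicit. Unset Printing Implicit Defensive.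

Record rtour := RTour {
  rt_n : nat;
  rt_E : rel 'I_rt_n;
  rt_refl : forall x, rt_E x x;
  rt_tour : forall x y, x != y -> rt_E x y (+) rt_E y x
}.

Definition is_hom (A B : rtour) (f : 'I_(rt_n A) -> 'I_(rt_n B)) : Prop :=
  forall x y, @rt_E A x y -> @rt_E B (f x) (f y).

Definition hom_image (A B : rtour) : Prop :=
  exists f : 'I_(rt_n B) -> 'I_(rt_n A),
    @is_hom B A f /\ forall y, exists x, f x = y.

Definition Av (O : seq rtour) (T : rtour) : Prop :=
  forall Oi, List.In Oi O -> ~ hom_image Oi T.

Definition wqo_on (P : rtour -> Prop) (le : rtour -> rtour -> Prop) : Prop :=
  (~ exists s : nat -> rtour, (forall n, P (s n)) /\
       forall n, le (s n.+1) (s n) /\ ~ le (s n) (s n.+1)) /\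
  (~ exists s : nat -> rtour, (forall n, P (s n)) /\
       forall i j, i <> j -> ~ le (s i) (s j)).

(** The reflexive tournament [twisted n] on [0, ..., n] is the transitive
    tournament with every edge between consecutive vertices reversed.  A fibre
    of a homomorphism out of a reflexive tournament is convex: if [x -> y -> z]
    and [x], [z] have the same image, so does [y].  For [n >= 4] this forces
    every homomorphism out of [twisted n] to be injective or constant, so the
    only homomorphic images of [twisted n] are itself and the one-vertex
    tournament.  The tournaments [twisted n] for [n] larger than every
    forbidden [O_i] thus form an infinite antichain inside [Av(O_1,...,O_k)]. *)
From mathcomp Require Import all_boot zify.
Set Implicit Arguments. Unset Strict Implicit.

Lemma hom_fibre_convex (A B : rtour) (f : 'I_(rt_n A) -> 'I_(rt_n B)) x y z :
  is_hom f -> rt_E x y -> rt_E y z -> f x = f z -> f y = f x.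
Proof.
move=> hf /hf Exy /hf Eyz fxz; apply/eqP; apply: contraT => nyx.
by have := rt_tour nyx; rewrite Exy fxz Eyz.
Qed.

Lemma surj_card_le m k (f : 'I_m -> 'I_k) :
  (forall y, exists x, f x = y) -> k <= m.
Proof.
move=> surj_f; rewrite -[k]card_ord -[m]card_ord -(size_codom f).
apply: leq_trans (card_size _); apply: subset_leq_card.
by apply/subsetP => y _; have [x <-] := surj_f y; exact: codom_f.
Qed.

Lemma surj_const_card m k (f : 'I_m -> 'I_k) (c : 'I_k) :
  (forall y, exists x, f x = y) -> (forall x, f x = c) -> k = 1.
Proof.
move=> surj_f fc; have k_gt0 : 0 < k by apply: leq_ltn_trans (ltn_ord c).
apply/eqP; rewrite eqn_leq k_gt0 andbT leqNgt; apply/negP => k_gt1.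
have [x0 e0] := surj_f (Ordinal k_gt0); have [x1 e1] := surj_f (Ordinal k_gt1).
by move: e0 e1; rewrite !fc => -> /(congr1 val).
Qed.

Definition twist_edge (i j : nat) : bool :=
  if i < j then j != i.+1 else i <= j.+1.

Lemma twist_edge_refl i : twist_edge i i.
Proof. by rewrite /twist_edge ltnn. Qed.

Lemma twist_edge_tour i j : i != j -> twist_edge i j (+) twist_edge j i.
Proof.
by rewrite /twist_edge; case: ltngtP => // ij _; case: eqP; case: leqP; lia.
Qed.

Lemma twist_edge_pred i : twist_edge i.+1 i.
Proof. by rewrite /twist_edge ltnNge leqnSn /= ltnSn. Qed.

Lemma twist_edge_fwd i j : i.+1 < j -> twist_edge i j.
Proof. by move=> ij; rewrite /twist_edge ifT //; lia. Qed.

Definition twisted (n : nat) : rtour :=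
  @RTour n.+1 (fun x y => twist_edge x y) (fun x => twist_edge_refl x)
    (fun x y => @twist_edge_tour x y).

Section TwistedHom.
Variables (n : nat) (B : rtour) (f : 'I_n.+1 -> 'I_(rt_n B)).
Hypothesis f_hom : @is_hom (twisted n) B f.

Let g k := f (inord k).

Lemma fibre_convex x y z : twist_edge x y -> twist_edge y z -> g x = g z ->
  x <= n -> y <= n -> z <= n -> g y = g x.
Proof.
move=> Exy Eyz gxz xn yn zn; apply: (hom_fibre_convex f_hom _ _ gxz) => /=;
  by rewrite !inordK.
Qed.

Lemma fibre_reaches_first a b : a < b <= n -> g a = g b -> g 0 = g b.
Proof.
case/andP=> + bn; elim: a => // a IH ab gab; apply: IH; first lia.
have Eab : twist_edge a b by apply: twist_edge_fwd.
by rewrite -gab (fibre_convex (twist_edge_pred a) Eab gab) //; lia.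
Qed.

Lemma fibre_reaches_last a c : a < c <= n -> g c = g a -> g n = g a.
Proof.
case/andP=> ac cn; have [d cdn] : exists d, c + d = n by exists (n - c); lia.
elim: d c ac cn cdn => [c _ _ <-|d IH c ac cn cdn gca]; first by rewrite addn0.
have Eac : twist_edge a c.+1 by apply: twist_edge_fwd.
apply: (IH c.+1); [lia | lia | lia |].
by apply: (fibre_convex Eac (twist_edge_pred c)); rewrite ?gca //; lia.
Qed.

Lemma fibre_ends_const : 3 < n -> g 0 = g n -> forall k, k <= n -> g k = g 0.
Proof.
move=> n_gt3 g0n.
have g2 : g 2 = g 0.
  by apply: (fibre_convex (twist_edge_fwd _) (twist_edge_fwd n_gt3) g0n); lia.
have g1 : g 1 = g 0.
  rewrite -g2; apply: (fibre_convex (twist_edge_pred 1) (twist_edge_pred 0));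
  by [rewrite g2 | lia].
elim=> [//|[|k] IH] kn; first exact: g1.
have E0k : twist_edge 0 k.+2 by apply: twist_edge_fwd.
by apply: (fibre_convex E0k (twist_edge_pred k.+1)); rewrite ?IH //; lia.
Qed.

Lemma twisted_hom_inj_or_const : 3 < n -> injective f \/ forall x, f x = f ord0.
Proof.
move=> n_gt3.
have [/injectiveP|/injectivePn[x [y nxy fxy]]] := boolP (injectiveb f).
  by left.
right; have gE (z : 'I_n.+1) : f z = g z by rewrite /g inord_val.
wlog xy : x y nxy fxy / x < y.
  move=> wlog_xy; case: (ltngtP x y) => [|yx|/val_inj xy]; first exact: wlog_xy.
    by apply: (wlog_xy y x); rewrite // eq_sym.
  by rewrite xy eqxx in nxy.
have gxy : g x = g y by rewrite -!gE.
have xyn : x < y <= n by rewrite xy -ltnS ltn_ord.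
have g0n : g 0 = g n.
  by rewrite (fibre_reaches_first xyn gxy) (fibre_reaches_last xyn) // gxy.
by move=> z; rewrite !gE (fibre_ends_const n_gt3 g0n) // -ltnS ltn_ord.
Qed.

End TwistedHom.

Lemma twisted_image_card n (B : rtour) :
  3 < n -> hom_image B (twisted n) -> rt_n B = 1 \/ rt_n B = n.+1.
Proof.
move=> n_gt3 [f [f_hom surj_f]].
have [f_inj|f_const] := twisted_hom_inj_or_const f_hom n_gt3; [right|left].
  have := leq_card f f_inj; rewrite !card_ord => card_le.
  by apply/eqP; rewrite eqn_leq card_le (surj_card_le surj_f).
exact: surj_const_card surj_f f_const.
Qed.

Lemma In_le_sumn (T : Type) (h : T -> nat) x s :
  List.In x s -> h x <= sumn (map h s).
Proof.
elim: s => [//|y s IH] /= [<-|/IH]; first exact: leq_addr.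
by move/leq_trans; apply; exact: leq_addl.
Qed.

Lemma twisted_Av (O : seq rtour) n :
  (forall Oi, List.In Oi O -> rt_n Oi <> 1) ->
  3 < n -> sumn (map (@rt_n) O) <= n -> Av O (twisted n).
Proof.
move=> O_not1 n_gt3 O_le_n Oi O_Oi /(twisted_image_card n_gt3)[|Oi_n].
  exact: O_not1.
by have := In_le_sumn (@rt_n) O_Oi; rewrite Oi_n; lia.
Qed.

Lemma twisted_image_twisted m n :
  0 < m -> 3 < n -> hom_image (twisted m) (twisted n) -> m = n.
Proof. by move=> m_gt0 n_gt3 /(twisted_image_card n_gt3) /=; lia. Qed.

Theorem theorem5p2 (O : seq rtour) :
  (forall Oi, List.In Oi O -> rt_n Oi <> 1) ->
  ~ wqo_on (Av O) hom_image.
Proof.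
move=> O_not1 [_ no_antichain]; apply: no_antichain.
pose N := sumn (map (@rt_n) O).
exists (fun k => twisted (N + k).+4).
split=> [k | i j ij /twisted_image_twisted].
  by apply: twisted_Av; rewrite // -/N; lia.
by move/(_ isT isT); lia.
Qed.
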